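(* Let $\epsilon>0$, $n\ge1$, let $\mathbf{w}\in\mathbb{R}^d$ be non-increasing, and let $1\le k\le d-1$ with $\mathbf{w}^k_{max}>\mathbf{w}^k_{min}$. For the additive mechanism with parameters $(\epsilon,\mathbf{w},k)$, $$\mathrm{risk}_{\mathrm{MM}}=\frac{k|a_k-b_k|+(d-k)|b_k|}{n},\qquad\mathrm{risk}_{\mathrm{EM}}=\frac{k|a_k-b_k|+(d-k)|b_k|}{n}\ \text{(for every input vote)},\qquad\mathrm{risk}_{\mathrm{DD}}\le2k|a_k|.$$
   Context: Candidates are $C_1,\dots,C_d$; a vote is a linear ordering; the scored vote $v$ assigns score $w_j$ to the candidate at rank $j$. Let $\mathcal{C}^k$ be the set of $k$-element subsets of candidates, $\mathbf{w}^k_{max}=\sum_{j=1}^kw_j$, $\mathbf{w}^k_{min}=\sum_{j=d-k+1}^dw_j$, $W=\sum_jw_j$. The additive mechanism on input $v$ outputs $S\in\mathcal{C}^k$ with probability $$\Pr[S\mid v]=\frac{\sum_{C_{j'}\in S}v_{j'}-\mathbf{w}^k_{min}}{\mathbf{w}^k_{max}-\mathbf{w}^k_{min}}\cdot\frac{e^\epsilon-1}{\Phi}+\frac1\Phi,\qquad \Phi=\binom dk\frac{\frac kd(e^\epsilon-1)W-e^\epsilon\mathbf{w}^k_{min}+\mathbf{w}^k_{max}}{\mathbf{w}^k_{max}-\mathbf{w}^k_{min}},$$ and releases the private view $\tilde v_j=a_k[C_j\in S]-b_k$, where $a_k=\big[W(e^\epsilon-1)-\tfrac dke^\epsilon\mathbf{w}^k_{min}+\tfrac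 dk\mathbf{w}^k_{max}\big]\frac{d-1}{(d-k)(e^\epsilon-1)}$ and $b_k=\big[\tfrac{(k-1)(e^\epsilon-1)}{d-1}W-e^\epsilon\mathbf{w}^k_{min}+\mathbf{w}^k_{max}\big]\frac{d-1}{(d-k)(e^\epsilon-1)}$. Let $\mathcal{D}_{\tilde v}$ be the set of all possible private views, $n$ the number of voters. Risk metrics: $\mathrm{risk}_{\mathrm{MM}}=\max_{\tilde v\in\mathcal{D}_{\tilde v}}\frac{|\tilde v|_1}{n}$; $\mathrm{risk}_{\mathrm{EM}}=\mathbb{E}[\frac{|\tilde v|_1}{n}]$ over the mechanism's randomness for a given input; $\mathrm{risk}_{\mathrm{DD}}=\max_{\tilde v,\tilde v'\in\mathcal{D}_{\tilde v}}|\tilde v-\tilde v'|_1$. *)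

From HB Require Import structures.
From mathcomp Require Import all_boot all_order all_algebra perm.
From mathcomp Require Import reals.
From mathcomp.analysis Require Import sequences exp.
Set Implicit Arguments. Unset Strict Implicit. Unset Printing Implicit Defensive.
Import Order.TTheory GRing.Theory Num.Theory.
Local Open Scope ring_scope.

(* Candidates C_1..C_d are indexed by 'I_d; ranks 1..d by 'I_d (0-based). *)

Section AdditiveMechanism.
Variables (R : realType) (d : nat) (w : 'I_d -> R) (k : nat) (eps : R).

Definition wmax : R := \sum_(j < d | (j < k)%N) w j.
Definition wmin : R := \sum_(j < d | (d - k <= j)%N) w j.
Definition Wsum : R := \sum_(j < d) w j.

(* A vote is a linear ordering, given by s : 'S_d mapping a candidate to its
   (0-based) rank; the scored vote assigns w_(rank) to each candidate. *)
Definition scored_vote (s : 'S_d) : 'I_d -> R := fun c => w (s c).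

Definition Phi : R :=
  ('C(d, k))%:R *
  (((k%:R / d%:R) * (expR eps - 1) * Wsum - expR eps * wmin + wmax)
     / (wmax - wmin)).

Definition mech_prob (v : 'I_d -> R) (S : {set 'I_d}) : R :=
  (\sum_(c in S) v c - wmin) / (wmax - wmin) * ((expR eps - 1) / Phi)
  + 1 / Phi.

Definition a_k : R :=
  (Wsum * (expR eps - 1) - (d%:R / k%:R) * expR eps * wmin
     + (d%:R / k%:R) * wmax)
  * ((d%:R - 1) / ((d%:R - k%:R) * (expR eps - 1))).

Definition b_k : R :=
  ((k%:R - 1) * (expR eps - 1) / (d%:R - 1) * Wsum - expR eps * wmin + wmax)
  * ((d%:R - 1) / ((d%:R - k%:R) * (expR eps - 1))).

Definition priv_view (S : {set 'I_d}) : 'I_d -> R :=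
  fun j => a_k * (j \in S)%:R - b_k.

Definition l1norm (x : 'I_d -> R) : R := \sum_(j < d) `|x j|.

(* D_{tilde v} = { priv_view S | S in C^k }; all l1 quantities are >= 0,
   so a max with neutral element 0 over the (nonempty) index set is the max. *)
Definition riskMM (n : nat) : R :=
  \big[Num.max/0]_(S : {set 'I_d} | #|S| == k) (l1norm (priv_view S) / n%:R).

Definition riskEM (n : nat) (s : 'S_d) : R :=
  \sum_(S : {set 'I_d} | #|S| == k)
     mech_prob (scored_vote s) S * (l1norm (priv_view S) / n%:R).

Definition riskDD : R :=
  \big[Num.max/0]_(S : {set 'I_d} | #|S| == k)
    \big[Num.max/0]_(S' : {set 'I_d} | #|S'| == k)
       l1norm (fun j => priv_view S j - priv_view S' j).

End AdditiveMechanism.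

From HB Require Import structures.
From mathcomp Require Import all_boot all_order all_algebra perm.
From mathcomp Require Import reals.
From mathcomp.analysis Require Import sequences exp.
From mathcomp Require Import ring lra.
Set Implicit Arguments. Unset Strict Implicit. Unset Printing Implicit Defensive.
Import Order.TTheory GRing.Theory Num.Theory.
Local Open Scope ring_scope.

(* Every output S has exactly k elements, so every private view has k entries
   a_k - b_k and d - k entries -b_k: its l1 norm is the constant
   k |a_k - b_k| + (d - k) |b_k|.  Hence risk_MM is this constant over n, and so
   is risk_EM once the output probabilities sum to one.  They do by the choice
   of Phi: by symmetry each candidate lies in a fraction k/d of the k-subsets,
   so the scores summed over all outputs give k/d C(d,k) W; and the bracket in
   Phi is positive because the mean of the k lowest weights is at most the mean
   of all weights.  Two private views differ by a_k exactly on the symmetric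
   difference of the outputs, which has at most 2k elements. *)

Lemma card_ord_geq n m : (m <= n)%N -> #|[pred j : 'I_n | (n - m <= j)%N]| = m.
Proof.
move=> le_mn; rewrite -sum1_card.
rewrite (eq_bigl (fun j : 'I_n => predT (j : nat) && (n - m <= j)%N)) //.
rewrite -(big_geq_mkord (n - m) n predT (fun=> 1%N)).
by rewrite sum_nat_const_nat subKn // muln1.
Qed.

Lemma sum_indicator (R : nzSemiRingType) (T : finType) (A : {pred T}) :
  \sum_i ((i \in A)%:R : R) = #|A|%:R.
Proof.
rewrite -sum1_card natr_sum [RHS]big_mkcond.
by apply: eq_bigr => i _; case: (i \in A).
Qed.

Lemma mean_lower_le_mean (R : realDomainType) (T : finType) (P : pred T)
    (w : T -> R) :
  (forall i j, ~~ P i -> P j -> w j <= w i) ->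
  #|T|%:R * \sum_(j | P j) w j <= #|P|%:R * \sum_j w j.
Proof.
move=> w_dom.
have cross_ge0 : 0 <= \sum_(i | ~~ P i) \sum_(j | P j) (w i - w j).
  by do 2![apply: sumr_ge0 => ? ?]; rewrite subr_ge0 w_dom.
have cross_sum : \sum_(i | ~~ P i) \sum_(j | P j) (w i - w j) =
    #|P|%:R * \sum_(i | ~~ P i) w i - #|[predC P]|%:R * \sum_(j | P j) w j.
  rewrite big_distrr /=.
  under eq_bigr do rewrite sumrB sumr_const.
  rewrite sumrB sumr_const mulr_natl; congr (_ - _).
  by apply: eq_bigr => i _; rewrite mulr_natl.
rewrite (bigID P predT) /= -(cardC P) natrD.
by rewrite cross_sum in cross_ge0; lra.
Qed.

Section KSubsets.
Variables (T : finType) (k : nat).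

Lemma card_ksubsets : #|[pred S : {set T} | #|S| == k]| = 'C(#|T|, k).
Proof. by rewrite -card_draws; apply: eq_card => S; rewrite inE. Qed.

Lemma sum_ksubsets_const (V : nmodType) (x : V) :
  \sum_(S : {set T} | #|S| == k) x = x *+ 'C(#|T|, k).
Proof. by rewrite sumr_const card_ksubsets. Qed.

Lemma count_ksubsets_mem_sym (c c' : T) :
  (\sum_(S : {set T} | #|S| == k) (c \in S) =
   \sum_(S : {set T} | #|S| == k) (c' \in S))%N.
Proof.
have tpermS_inj := imset_inj (@perm_inj _ (tperm c c')).
rewrite (reindex_inj tpermS_inj); apply: eq_big => [S|S _].
  by rewrite card_imset //; apply: perm_inj.
by rewrite -{1}(tpermR c c') mem_imset //; apply: perm_inj.
Qed.

Lemma count_ksubsets_mem (c : T) :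
  (#|T| * \sum_(S : {set T} | #|S| == k) (c \in S) = k * 'C(#|T|, k))%N.
Proof.
rewrite -sum_nat_const -(eq_bigr _ (fun c' _ => count_ksubsets_mem_sym c' c)).
rewrite exchange_big /= -card_ksubsets mulnC -sum_nat_const.
apply: eq_big => // S /eqP <-; rewrite -sum1_card [RHS]big_mkcond /=.
by apply: eq_bigr => c' _; case: (c' \in S).
Qed.

Lemma sum_ksubsets_sum (V : nmodType) (v : T -> V) :
  (\sum_(S : {set T} | #|S| == k) \sum_(c in S) v c) *+ #|T| =
  (\sum_c v c) *+ (k * 'C(#|T|, k)).
Proof.
have -> : \sum_(S : {set T} | #|S| == k) \sum_(c in S) v c =
          \sum_c v c *+ \sum_(S : {set T} | #|S| == k) (c \in S).
  rewrite (exchange_big_dep predT) //=; apply: eq_bigr => c _.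
  by rewrite -sumrMnr big_mkcondr; apply: eq_bigr => S _; case: (c \in S).
rewrite -!sumrMnl; apply: eq_bigr => c _.
by rewrite -mulrnA mulnC count_ksubsets_mem.
Qed.

Lemma bigmax_ksubsets_const (R : realDomainType) (F : {set T} -> R) (x : R) :
  (k <= #|T|)%N -> 0 <= x -> (forall S : {set T}, #|S| = k -> F S = x) ->
  \big[Num.max/0]_(S : {set T} | #|S| == k) F S = x.
Proof.
move=> le_kT x_ge0 F_const; apply/le_anti/andP; split.
  by apply: bigmax_le => // S /eqP/F_const ->.
have /card_gt0P[S0] : (0 < #|[pred S : {set T} | #|S| == k]|)%N.
  by rewrite card_ksubsets bin_gt0.
rewrite inE => S0_k; rewrite -(F_const S0 (eqP S0_k)); exact: le_bigmax_cond.
Qed.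

End KSubsets.

Section AdditiveMechanism.
Variables (R : realType) (d : nat) (w : 'I_d -> R) (k : nat) (eps : R).

Local Notation a := (a_k w k eps).
Local Notation b := (b_k w k eps).
Local Notation view := (priv_view w k eps).

Lemma l1norm_priv_view (S : {set 'I_d}) :
  l1norm (view S) = #|S|%:R * `|a - b| + (d - #|S|)%:R * `|b|.
Proof.
rewrite /l1norm (bigID (mem S)) /=.
under eq_bigr => j jS do rewrite /priv_view jS mulr1.
under [X in _ + X]eq_bigr => j jS do
  rewrite /priv_view (negbTE jS) mulr0 sub0r normrN.
have cardCS : #|[predC S]| = (#|'I_d| - #|S|)%N by rewrite -(cardC S) addKn.
by rewrite !sumr_const cardCS card_ord !mulr_natl.
Qed.

Lemma l1norm_priv_view_sub (S S' : {set 'I_d}) :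
  l1norm (fun j => view S j - view S' j) <= (#|S| + #|S'|)%:R * `|a|.
Proof.
rewrite /l1norm natrD mulrDl -!sum_indicator !big_distrl -big_split /=.
apply: ler_sum => j _.
have -> : view S j - view S' j = a * ((j \in S)%:R - (j \in S')%:R).
  by rewrite /priv_view; ring.
rewrite normrM -mulrDl mulrC ler_wpM2r //.
by rewrite (le_trans (ler_normB _ _)) // !normr_nat.
Qed.

Lemma sum_scored_vote (s : 'S_d) : \sum_c scored_vote w s c = Wsum w.
Proof. by rewrite /Wsum [RHS](reindex_inj (@perm_inj _ s)). Qed.

Section Normalization.
Hypotheses (eps_gt0 : 0 < eps)
  (w_noninc : forall i j : 'I_d, (i <= j)%N -> w j <= w i)
  (k_gt0 : (0 < k)%N) (k_le_d : (k <= d)%N)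
  (wmin_lt_wmax : wmin w k < wmax w k).

Let d_gt0 : (0 < d)%N := leq_trans k_gt0 k_le_d.
Let gap_neq0 : wmax w k - wmin w k != 0.
Proof. by rewrite subr_eq0 gt_eqF. Qed.

Lemma wmin_le_mean : d%:R * wmin w k <= k%:R * Wsum w.
Proof.
have := @mean_lower_le_mean R _ [pred j : 'I_d | (d - k <= j)%N] w.
rewrite card_ord card_ord_geq //; apply=> i j.
rewrite !inE -ltnNge => lt_i le_j.
exact/w_noninc/ltnW/(leq_trans lt_i).
Qed.

Lemma Phi_numerator_gt0 :
  0 < k%:R / d%:R * (expR eps - 1) * Wsum w - expR eps * wmin w k + wmax w k.
Proof.
have e_gt1 : 1 < expR eps by rewrite expR_gt1.
have : wmin w k <= k%:R / d%:R * Wsum w.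
  by rewrite mulrAC ler_pdivlMr ?ltr0n // mulrC wmin_le_mean.
rewrite -subr_ge0 => wmin_le.
have -> : k%:R / d%:R * (expR eps - 1) * Wsum w - expR eps * wmin w k + wmax w k
  = (expR eps - 1) * (k%:R / d%:R * Wsum w - wmin w k) + (wmax w k - wmin w k).
  by ring.
by rewrite ltr_wpDl ?subr_gt0 // mulr_ge0 // subr_ge0 ltW.
Qed.

Lemma Phi_neq0 : Phi w k eps != 0.
Proof.
have norm_neq0 := lt0r_neq0 Phi_numerator_gt0.
by rewrite !mulf_neq0 ?invr_eq0 // pnatr_eq0 -lt0n bin_gt0.
Qed.

Lemma sum_mech_prob (v : 'I_d -> R) : \sum_c v c = Wsum w ->
  \sum_(S : {set 'I_d} | #|S| == k) mech_prob w k eps v S = 1.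
Proof.
move=> sum_v.
have d_neq0 : d%:R != 0 :> R by rewrite pnatr_eq0 -lt0n.
have sum_sums : \sum_(S : {set 'I_d} | #|S| == k) \sum_(c in S) v c =
    k%:R * 'C(d, k)%:R / d%:R * Wsum w.
  apply: (mulIf d_neq0); have := sum_ksubsets_sum k v.
  rewrite card_ord sum_v -[LHS]mulr_natr -[RHS]mulr_natr natrM => ->.
  by field.
rewrite /mech_prob; under eq_bigr do rewrite mulrA -mulrDl.
rewrite -big_distrl /= big_split /= -!big_distrl /= sumrB sum_sums.
rewrite !sum_ksubsets_const card_ord -[wmin w k *+ _]mulr_natr.
rewrite -[RHS](mulfV Phi_neq0); congr (_ / _).
by rewrite /Phi; field; rewrite gap_neq0.
Qed.

End Normalization.
End AdditiveMechanism.

Theorem theorem6p5 (R : realType) (d : nat) (w : 'I_d -> R) (k n : nat)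
  (eps : R) :
  0 < eps -> (1 <= n)%N ->
  (forall i j : 'I_d, (i <= j)%N -> w j <= w i) ->
  (1 <= k)%N -> (k <= d - 1)%N ->
  wmin w k < wmax w k ->
  riskMM w k eps n
    = (k%:R * `|a_k w k eps - b_k w k eps| + (d%:R - k%:R) * `|b_k w k eps|)
        / n%:R
  /\ (forall s : 'S_d, riskEM w k eps n s
    = (k%:R * `|a_k w k eps - b_k w k eps| + (d%:R - k%:R) * `|b_k w k eps|)
        / n%:R)
  /\ riskDD w k eps <= 2 * k%:R * `|a_k w k eps|.
Proof.
move=> eps_gt0 _ w_noninc k_gt0 k_lt_d wmin_lt_wmax.
have k_le_d : (k <= d)%N by rewrite (leq_trans k_lt_d) ?leq_subr.
set r := (_ + _) / n%:R.
have view_risk (S : {set 'I_d}) :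
    #|S| = k -> l1norm (priv_view w k eps S) / n%:R = r.
  by move=> cardS; rewrite l1norm_priv_view cardS natrB.
split; [|split].
- apply: bigmax_ksubsets_const view_risk; rewrite ?card_ord //.
  by rewrite divr_ge0 // addr_ge0 // mulr_ge0 // subr_ge0 ler_nat.
- move=> s; rewrite /riskEM.
  under eq_bigr => S /eqP cardS do rewrite view_risk //.
  by rewrite -big_distrl /= sum_mech_prob ?mul1r ?sum_scored_vote.
- have bound_ge0 : 0 <= 2 * k%:R * `|a_k w k eps| by rewrite !mulr_ge0.
  apply: bigmax_le => // S /eqP cardS; apply: bigmax_le => // S' /eqP cardS'.
  rewrite (le_trans (l1norm_priv_view_sub w k eps S S')) //.
  by rewrite cardS cardS' addnn -mul2n natrM.
Qed.
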